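(* For $x_b,x_\theta\in\mathbb{R}$ let $$F(x_b,x_\theta)=\int_{\mathbb{R}}\frac{e^{(y+x_\theta)x_b}-e^{-(y+x_\theta)x_b}}{e^{(y+x_\theta)x_b}+e^{-(y+x_\theta)x_b}}\,(y+x_\theta)\,\phi(y)\,dy.$$ Then for each fixed $x_\theta$, $x_b\mapsto F(x_b,x_\theta)$ is concave on $x_b\ge0$; moreover (i) $F(0,x_\theta)=0$ and (ii) $F(x_\theta,x_\theta)=x_\theta$.
   Context: $\phi$ is the standard normal density. *)

From HB Require Import structures.
From mathcomp Require Import all_boot all_order all_algebra.
From mathcomp Require Import all_classical all_reals all_analysis.
Set Implicit Arguments. Unset Strict Implicit. Unset Printing Implicit Defensive.
Import Order.TTheory GRing.Theory Num.Theory.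
Import numFieldNormedType.Exports.
Local Open Scope classical_set_scope.
Local Open Scope ring_scope.

Definition phi {R : realType} (y : R) : R := normal_pdf 0 1 y.

Definition F {R : realType} (xb xt : R) : R :=
  \int[@lebesgue_measure R]_(y in [set: R])
    ((expR ((y + xt) * xb) - expR (- ((y + xt) * xb))) /
     (expR ((y + xt) * xb) + expR (- ((y + xt) * xb))) * (y + xt) * phi y).

Definition concave_on {R : realType} (D : set R) (f : R -> R) : Prop :=
  forall x y t, D x -> D y -> 0 <= t -> t <= 1 ->
    t * f x + (1 - t) * f y <= f (t * x + (1 - t) * y).

(* Since tanh'' = -2 tanh (1 - tanh^2) <= 0 on [0, +oo), tanh is concave there; as
   z tanh (z b) = |z| tanh (|z| b), every integrand b |-> tanh ((y + xt) b) (y + xt) phi y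
   is concave on b >= 0, and integration against the weight phi keeps concavity.
   For F x x write tanh = 1 + (tanh - 1): the first part integrates to x, and the
   remainder y |-> (tanh ((y + x) x) - 1) (y + x) phi y is odd about y = - x, because
   phi (u - x) = e^(2ux) phi (u + x) and 1 + tanh v = e^(2v) (1 - tanh v). *)

From HB Require Import structures.
From mathcomp Require Import all_boot all_order all_algebra.
From mathcomp Require Import all_classical all_reals all_analysis.
From mathcomp Require Import measurable_realfun normal_distribution.
From mathcomp Require Import ring lra.
Import Order.TTheory GRing.Theory Num.Theory.
Import numFieldNormedType.Exports.
Local Open Scope classical_set_scope.
Local Open Scope ring_scope.

Section tanh.
Context {R : realType}.
Implicit Types a b : R.

Definition tanh a := (expR a - expR (- a)) / (expR a + expR (- a)).

Lemma tanhN a : tanh (- a) = - tanh a.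
Proof. by rewrite /tanh opprK -mulNr opprB [expR (- a) + expR a]addrC. Qed.

Lemma tanh0 : tanh 0 = 0.
Proof. by rewrite /tanh oppr0 subrr mul0r. Qed.

Lemma tanh_ge0 a : 0 <= a -> 0 <= tanh a.
Proof.
move=> a0; apply: divr_ge0; last by rewrite addr_ge0 ?expR_ge0.
by rewrite subr_ge0 ler_expR; lra.
Qed.

Lemma normr_tanh_le1 a : `|tanh a| <= 1.
Proof.
have ea := expR_gt0 a; have eNa := expR_gt0 (- a).
rewrite normrM normfV (gtr0_norm (addr_gt0 ea eNa)) ler_pdivrMr ?addr_gt0 //.
by rewrite mul1r ler_norml; apply/andP; split; lra.
Qed.

Lemma sqr_tanh_le1 a : tanh a ^+ 2 <= 1.
Proof.
by rewrite -[tanh a ^+ 2]real_normK ?num_real // exprn_ile1 ?normr_tanh_le1.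
Qed.

Lemma tanhE a : tanh a = 1 - 2 / (1 + expR a ^+ 2).
Proof.
have ea : expR a != 0 by rewrite gt_eqF ?expR_gt0.
have e2 : 1 + expR a ^+ 2 != 0 by rewrite gt_eqF // ltr_pwDl ?sqr_ge0.
by rewrite /tanh expRN; field; rewrite ea andbT.
Qed.

Lemma is_derive_tanh a : is_derive a 1 tanh (1 - tanh a ^+ 2).
Proof.
have -> : tanh = (fun b => 1 - 2 * (1 + expR b ^+ 2)^-1).
  by apply/funext => b; rewrite tanhE.
have e2 : 1 + expR a ^+ 2 != 0 by rewrite gt_eqF // ltr_pwDl ?sqr_ge0.
by apply: is_derive_eq; rewrite /GRing.scale /=; field.
Qed.

Lemma is_derive_tanh2B1 a :
  is_derive a 1 (fun b => tanh b ^+ 2 - 1) (2 * tanh a * (1 - tanh a ^+ 2)).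
Proof.
have Dtanh := is_derive_tanh a.
by apply: is_derive_eq; rewrite /GRing.scale /=; ring.
Qed.

Lemma continuous_tanh : continuous tanh.
Proof.
by move=> a; apply/differentiable_continuous/derivable1_diffP; case: (is_derive_tanh a).
Qed.

Lemma measurable_tanh : measurable_fun [set: R] tanh.
Proof. exact: continuous_measurable_fun continuous_tanh. Qed.

Lemma concave_tanh : concave_on [set a | 0 <= a] tanh.
Proof.
move=> x y t /= x0 y0 t0 t1.
wlog xy : x y t x0 y0 t0 t1 / x <= y.
  move=> wlog_xy; have [/wlog_xy|/ltW yx] := leP x y; first exact.
  have := wlog_xy y x (1 - t) y0 x0; rewrite (_ : 1 - (1 - t) = t); last by ring.
  rewrite [_ * tanh y + _]addrC [_ * y + _]addrC; apply; lra.
have DNtanh a : is_derive a 1 (fun b => - tanh b) (tanh a ^+ 2 - 1).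
  by apply: is_derive_eq; [exact: (is_deriveN (is_derive_tanh a)) | rewrite opprB].
have cont_Ntanh : continuous (fun a => - tanh a).
  by move=> a; apply: continuousN; exact: continuous_tanh.
suff : - tanh (t * x + (1 - t) * y) <= t * - tanh x + (1 - t) * - tanh y.
  by lra.
have := @second_derivative_convex R (fun a => - tanh a) x y.
have -> : 'D_1 (fun a => - tanh a) = (fun a => tanh a ^+ 2 - 1).
  by apply/funext => a; case: (DNtanh a).
move=> /(_ _ _ _ _ _ (Itv01 t0 t1) xy); rewrite !convRE /=; apply.
- move=> a /andP[xa _]; case: (is_derive_tanh2B1 a) => _ ->.
  apply: mulr_ge0; last by rewrite subr_ge0 sqr_tanh_le1.
  by rewrite mulr_ge0 // tanh_ge0 //; lra.
- exact/cvg_at_left_filter/cont_Ntanh.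
- exact/cvg_at_right_filter/cont_Ntanh.
- by move=> a _; case: (DNtanh a).
- by move=> a _; case: (is_derive_tanh2B1 a).
Qed.

Lemma concave_tanh_scale z : concave_on [set b | 0 <= b] (fun b => tanh (z * b) * z).
Proof.
have tanh_norm b : tanh (z * b) * z = tanh (`|z| * b) * `|z|.
  have [z0|z0] := leP 0 z; first by rewrite ger0_norm.
  by rewrite ltr0_norm // mulNr tanhN mulrNN.
move=> b1 b2 t b10 b20 t0 t1; rewrite /= (tanh_norm b1) (tanh_norm b2) tanh_norm.
set u := `|z|; have u0 : 0 <= u := normr_ge0 z.
rewrite (_ : u * (t * b1 + (1 - t) * b2) = t * (u * b1) + (1 - t) * (u * b2)); last by ring.
rewrite (_ : t * (tanh (u * b1) * u) + (1 - t) * (tanh (u * b2) * u) =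
  (t * tanh (u * b1) + (1 - t) * tanh (u * b2)) * u); last by ring.
by rewrite ler_wpM2r //; apply: concave_tanh => //; exact: mulr_ge0.
Qed.

Lemma tanhD1 a : tanh a + 1 = expR (2 * a) * (1 - tanh a).
Proof.
have e2 : 1 + expR a ^+ 2 != 0 by rewrite gt_eqF // ltr_pwDl ?sqr_ge0.
by rewrite tanhE expRM_natl; field.
Qed.

End tanh.

Section concavity.
Context {R : realType}.

Lemma concave_onMr (D : set R) (f : R -> R) (k : R) :
  concave_on D f -> 0 <= k -> concave_on D (fun x => f x * k).
Proof.
move=> concf k0 x y t Dx Dy t0 t1.
by have := ler_wpM2r k0 (concf x y t Dx Dy t0 t1); rewrite mulrDl !mulrA.
Qed.

Lemma concave_on_Rintegral d (T : measurableType d) (mu : {measure set T -> \bar R})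
    (D : set R) (g : R -> T -> R) :
  (forall b, mu.-integrable [set: T] (EFin \o g b)) ->
  (forall x, concave_on D (fun b => g b x)) ->
  concave_on D (fun b => \int[mu]_x g b x).
Proof.
move=> intg concg b1 b2 t Db1 Db2 t0 t1.
have intZ k b : mu.-integrable [set: T] (EFin \o (fun x => k * g b x)).
  apply: (eq_integrable _ (fun x => k%:E * (g b x)%:E)%E) => //.
  exact: integrableZl (intg b).
rewrite -!RintegralZl // -RintegralD //.
apply: le_Rintegral => //; last by move=> x _; exact: concg.
apply: (eq_integrable _ ((EFin \o (fun x => t * g b1 x)%R)
                          \+ (EFin \o (fun x => (1 - t) * g b2 x)%R))%E) => //.
exact: integrableD (intZ _ _) (intZ _ _).
Qed.

End concavity.

Section lebesgue_reflection.
Context {R : realType}.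
Local Notation mu := (@lebesgue_measure R).
Variable c : R.

Let measurable_reflect : measurable_fun [set: R] (fun y : R => c - y : measurableTypeR R).
Proof. exact: measurable_funB. Qed.

Lemma lebesgue_measure_reflect (A : set R) : measurable A ->
  pushforward mu (fun y : R => c - y : measurableTypeR R) A = mu A.
Proof.
move=> mA; apply/esym.
apply: (lebesgue_measure_unique (mu := pushforward mu _ : {measure set _ -> \bar R})) => //=.
move=> _ [[a b]] _ <-; rewrite /pushforward.
have -> : (fun y => c - y) @^-1` `]a, b]%classic = `[c - b, c - a[%classic.
  by apply/seteqP; split => y /=; rewrite !in_itv /=; lra.
rewrite !lebesgue_measure_itv /= !lte_fin.
by congr (if _ then _ else _); [lra | congr EFin; ring].
Qed.

Lemma integral_reflect (f : R -> \bar R) : measurable_fun [set: R] f ->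
  mu.-integrable [set: R] (fun y => f (c - y)) ->
  (\int[mu]_y f (c - y)%R = \int[mu]_y f y)%E.
Proof.
move=> mf intf.
transitivity (\int[pushforward mu (fun y : R => (c - y)%R : measurableTypeR R)]_y f y)%E.
  by rewrite integral_pushforward // preimage_setT.
by apply: eq_measure_integral => A mA _; exact: lebesgue_measure_reflect.
Qed.

Lemma Rintegral_odd_reflect (f : R -> R) :
  mu.-integrable [set: R] (EFin \o f) -> (forall y, f (c - y) = - f y) ->
  \int[mu]_y f y = 0.
Proof.
move=> intf fN; have /measurable_EFinP mf := measurable_int mu intf.
have : \int[mu]_y f (c - y) = \int[mu]_y f y.
  rewrite /Rintegral (@integral_reflect (EFin \o f)) //; first exact/measurable_EFinP.
  apply: (@eq_integrable _ _ _ mu _ measurableT (fun y => (-1)%:E * (f y)%:E)%E).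
    by move=> y _; rewrite /= fN -EFinM mulN1r.
  exact: integrableZl.
under eq_Rintegral do rewrite fN -mulN1r.
rewrite RintegralZl //; lra.
Qed.

End lebesgue_reflection.

Section standard_normal_density.
Context {R : realType}.
Local Notation mu := (@lebesgue_measure R).
Implicit Types c x y : R.

Lemma phiE y : phi y = normal_peak 1 * expR (- (y ^+ 2) / 2).
Proof. by rewrite /phi normal_pdfE ?oner_neq0 // /normal_fun subr0 expr1n. Qed.

Lemma phi_ge0 y : 0 <= phi y.
Proof. exact: normal_pdf_ge0. Qed.

Lemma phiN y : phi (- y) = phi y.
Proof. by rewrite !phiE sqrrN. Qed.

Lemma phiB_expR y x : phi (y - x) = expR (2 * (y * x)) * phi (y + x).
Proof. by rewrite !phiE mulrCA -expRD; congr (_ * expR _); field. Qed.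

Lemma measurable_phi : measurable_fun [set: R] phi.
Proof. exact: measurable_normal_pdf. Qed.

Lemma integrable_phi : mu.-integrable [set: R] (EFin \o phi).
Proof. exact: integrable_normal_pdf. Qed.

Lemma Rintegral_phi : \int[mu]_y phi y = 1.
Proof. by rewrite /Rintegral integral_normal_pdf. Qed.

(* [|y| <= 1 + y^2/4 <= exp (y^2/4)] trades the factor [|y|] for a wider Gaussian. *)
Lemma normr_mul_phi_le y :
  `|y| * phi y <= normal_peak 1 / normal_peak (Num.sqrt 2) * normal_pdf 0 (Num.sqrt 2) y.
Proof.
have s2 : Num.sqrt 2 != 0 :> R by rewrite gt_eqF // sqrtr_gt0.
rewrite phiE normal_pdfE // /normal_fun subr0 sqr_sqrtr // mulrA divfK; last first.
  by rewrite gt_eqF // normal_peak_gt0.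
rewrite mulrCA ler_wpM2l ?normal_peak_ge0 //.
have -> : - y ^+ 2 / (2 *+ 2) = y ^+ 2 / 4 + (- y ^+ 2 / 2) by rewrite -mulr_natr; field.
rewrite expRD ler_wpM2r ?expR_ge0 //; apply: le_trans (expR_ge1Dx _).
have : 0 <= (`|y| - 2) ^+ 2 by exact: sqr_ge0.
by rewrite -[y ^+ 2]real_normK ?num_real //; nra.
Qed.

Lemma integrable_mul_phi : mu.-integrable [set: R] (EFin \o (fun y => y * phi y)).
Proof.
pose s : R := Num.sqrt 2; pose c := normal_peak 1 / normal_peak s.
have s0 : s != 0 by rewrite gt_eqF // sqrtr_gt0.
apply: (@le_integrable _ _ _ mu _ measurableT _ (fun y => (c * normal_pdf 0 s y)%:E)).
- by apply/measurable_EFinP; apply: measurable_funM => //; exact: measurable_phi.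
- move=> y _ /=; rewrite !lee_fin normrM (ger0_norm (phi_ge0 y)).
  exact: le_trans (normr_mul_phi_le y) (ler_norm _).
- apply: (@eq_integrable _ _ _ mu _ measurableT (fun y => c%:E * (normal_pdf 0 s y)%:E)%E).
    by move=> y _; rewrite EFinM.
  exact: integrableZl (integrable_normal_pdf _ _).
Qed.

Lemma integrable_addr_mul_phi c :
  mu.-integrable [set: R] (EFin \o (fun y => (y + c) * phi y)).
Proof.
apply: (@eq_integrable _ _ _ mu _ measurableT ((EFin \o (fun y => y * phi y)%R)
                         \+ (fun y => c%:E * (phi y)%:E))%E) => //.
  by move=> y _; rewrite /= -EFinM -EFinD mulrDl.
apply: integrableD => //; [exact: integrable_mul_phi | exact: integrableZl integrable_phi].
Qed.

Lemma Rintegral_addr_mul_phi c : \int[mu]_y ((y + c) * phi y) = c.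
Proof.
under eq_Rintegral do rewrite mulrDl.
rewrite RintegralD //; last 2 first.
- exact: integrable_mul_phi.
- apply: (@eq_integrable _ _ _ mu _ measurableT (fun y => c%:E * (phi y)%:E)%E) => //.
  exact: integrableZl integrable_phi.
rewrite RintegralZl //; last exact: integrable_phi.
rewrite Rintegral_phi mulr1 (@Rintegral_odd_reflect _ 0) ?add0r //.
- exact: integrable_mul_phi.
- by move=> y; rewrite sub0r phiN mulNr.
Qed.

Lemma integrable_bounded_mul_phi (h : R -> R) (M c : R) :
  measurable_fun [set: R] h -> (forall y, `|h y| <= M) ->
  mu.-integrable [set: R] (EFin \o (fun y => h y * (y + c) * phi y)).
Proof.
move=> mh hM.
apply: (@eq_integrable _ _ _ mu _ measurableT
  ((EFin \o (fun y => (y + c) * phi y)%R) \* (EFin \o h))%E) => //.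
  by move=> y _; rewrite /= -EFinM mulrC mulrA.
apply: integrableMl => //; first exact: integrable_addr_mul_phi.
by exists M; split; [exact: num_real | move=> x Mx y _; apply: le_trans (hM y) (ltW Mx)].
Qed.

End standard_normal_density.

Section F_properties.
Context {R : realType}.
Local Notation mu := (@lebesgue_measure R).
Implicit Types x xb xt : R.

Lemma FE xb xt : F xb xt = \int[mu]_y (tanh ((y + xt) * xb) * (y + xt) * phi y).
Proof. by []. Qed.

Lemma measurable_tanh_affine (a c : R) :
  measurable_fun [set: R] (fun y => tanh ((y + c) * a)).
Proof.
apply: measurableT_comp; first exact: measurable_tanh.
by apply: measurable_funM => //; exact: measurable_funD.
Qed.

Lemma concave_F xt : concave_on [set xb | 0 <= xb] (fun xb => F xb xt).
Proof.
change (concave_on [set xb | 0 <= xb]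
  (fun xb => \int[mu]_y (tanh ((y + xt) * xb) * (y + xt) * phi y))).
apply: concave_on_Rintegral => [xb | y].
  apply: integrable_bounded_mul_phi (measurable_tanh_affine _ _) _ => y.
  exact: normr_tanh_le1.
exact: concave_onMr (concave_tanh_scale (y + xt)) (phi_ge0 y).
Qed.

Lemma F0 xt : F 0 xt = 0.
Proof.
rewrite FE; under eq_Rintegral do rewrite mulr0 tanh0 !mul0r.
by rewrite Rintegral_cst // mul0r.
Qed.

Lemma Fxx x : F x x = x.
Proof.
have tanh_split y : tanh ((y + x) * x) * (y + x) * phi y =
    (y + x) * phi y + (tanh ((y + x) * x) - 1) * (y + x) * phi y by ring.
rewrite FE; under eq_Rintegral do rewrite tanh_split.
have int_odd : mu.-integrable [set: R]
    (EFin \o (fun y => (tanh ((y + x) * x) - 1) * (y + x) * phi y)).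
  apply: (@integrable_bounded_mul_phi _ _ 2).
    by apply: measurable_funB => //; exact: measurable_tanh_affine.
  move=> y; apply: le_trans (ler_normB _ _) _.
  by rewrite normr1; have := normr_tanh_le1 ((y + x) * x); lra.
rewrite RintegralD //; last exact: integrable_addr_mul_phi.
rewrite Rintegral_addr_mul_phi (@Rintegral_odd_reflect _ (- (2 * x))) ?addr0 //.
move=> y; rewrite (_ : - (2 * x) - y + x = - (y + x)); last by ring.
rewrite (_ : - (2 * x) - y = - (y + x + x)); last by ring.
have -> : phi y = phi (y + x - x) by rewrite addrK.
rewrite phiN phiB_expR mulNr tanhN.
rewrite (_ : - tanh ((y + x) * x) - 1 = - (tanh ((y + x) * x) + 1)); last by ring.
by rewrite tanhD1; ring.
Qed.

End F_properties.

Theorem lemma19 (R : realType) (xt : R) :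
  concave_on [set xb : R | 0 <= xb] (fun xb => F xb xt) /\
  F 0 xt = 0 /\ F xt xt = xt.
Proof. by split; [exact: concave_F | split; [exact: F0 | exact: Fxx]]. Qed.
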